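(* Consider problem (PI): minimize $f(x)$ subject to $x\in X$, $g_i(x)\le 0$, $i=1,\dots,m$, where $\Gamma\subseteq\mathbb R^n$ is an open convex set and $X\subseteq\Gamma$ is open and convex. Let $\bar S$ be its solution set and $\bar x\in\bar S$. Assume $f:\Gamma\to\mathbb R$ is continuously differentiable and quasiconvex on $\Gamma$, $g_i$ for $i\in I(\bar x)$ are differentiable and quasiconvex on $\Gamma$, $g_i$ for $i\notin I(\bar x)$ are continuous at $\bar x$, $\nabla f(\bar x)\ne 0$, MFCQ holds at $\bar x$, and $\lambda\in\mathbb R^m$ is a fixed multiplier with $\lambda_i\ge0$, $\lambda_ig_i(\bar x)=0$ for all $i$ and $\nabla f(\bar x)+\sum_{i\in I(\bar x)}\lambda_i\nabla g_i(\bar x)=0$. Define \[ \hat S_1''(\lambda):=\Big\{x\in X_1(\lambda)\ \Big|\ \nabla g_i(\bar x)^T(x-\bar x)=0\ \forall i\in\tilde I(\bar x,\lambda),\ \nabla f(x)\ne0,\ \tfrac{\nabla f(x)}{\|\nabla f(x)\|}=\tfrac{\nabla f(\bar x)}{\|\nabla f(\bar x)\|}\Big\}, \] \[ \hat S_2''(\lambda):=\Big\{x\in X_1(\lambda)\ \Big|\ \nabla g_i(\bar x)^T(x-\bar x)\ge0\ \forall i\in\tilde I(\bar x,\lambda),\ \nabla f(x)\ne0,\ \tfrac{\nabla f(x)}{\|\nabla f(x)\|}=\tfrac{\nabla f(\bar x)}{\|\nabla f(\bar x)\|}\Big\}. \] Then $\bar S=\hat S_1''(\lambda)=\hat S_2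''(\lambda)$.
   Context: Quasiconvexity on $\Gamma$: $f(x+t(y-x))\le\max\{f(x),f(y)\}$ for all $x,y\in\Gamma$, $t\in[0,1]$. Feasible set $S:=\{x\in X\mid g_i(x)\le0,\ i=1,\dots,m\}$; $\bar S$ the set of global minimizers of $f$ on $S$. Active index set $I(x):=\{i\mid g_i(x)=0\}$. MFCQ holds at $\bar x$ iff there is $y\in\mathbb R^n$ with $\nabla g_i(\bar x)^Ty<0$ for all $i\in I(\bar x)$. Define $\tilde I(\bar x,\lambda):=\{i\mid g_i(\bar x)=0,\ \lambda_i>0\}$ and $X_1(\lambda):=\{x\in X\mid g_i(x)=0\ \forall i\in\tilde I(\bar x,\lambda),\ g_i(x)\le0\ \forall i\notin\tilde I(\bar x,\lambda)\}$. *)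

From mathcomp Require Import all_boot.
From Stdlib Require Import Reals.
Set Implicit Arguments. Unset Strict Implicit.
Open Scope R_scope.

Definition vec (n : nat) := 'I_n -> R.

Definition vadd n (u v : vec n) : vec n := fun k => u k + v k.
Definition vsub n (u v : vec n) : vec n := fun k => u k - v k.
Definition vscale n (t : R) (u : vec n) : vec n := fun k => t * u k.
Definition vzero n : vec n := fun _ => 0.
Definition dot n (u v : vec n) : R := \big[Rplus/0]_(k < n) (u k * v k).
Definition vnorm n (u : vec n) : R := sqrt (dot u u).

Definition is_open n (U : vec n -> Prop) : Prop :=
  forall x, U x -> exists eps, 0 < eps /\
    forall y, vnorm (vsub y x) < eps -> U y.

Definition is_convex n (U : vec n -> Prop) : Prop :=
  forall x y t, U x -> U y -> 0 <= t <= 1 ->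
    U (vadd x (vscale t (vsub y x))).

Definition quasiconvex_on n (Gam : vec n -> Prop) (f : vec n -> R) : Prop :=
  forall x y t, Gam x -> Gam y -> 0 <= t <= 1 ->
    f (vadd x (vscale t (vsub y x))) <= Rmax (f x) (f y).

Definition has_gradient n (f : vec n -> R) (x d : vec n) : Prop :=
  forall eps, 0 < eps -> exists delta, 0 < delta /\
    forall h, vnorm h < delta ->
      Rabs (f (vadd x h) - f x - dot d h) <= eps * vnorm h.

Definition continuous_at_v n (f : vec n -> R) (x : vec n) : Prop :=
  forall eps, 0 < eps -> exists delta, 0 < delta /\
    forall y, vnorm (vsub y x) < delta -> Rabs (f y - f x) < eps.

Definition vcontinuous_at n (F : vec n -> vec n) (x : vec n) : Prop :=
  forall eps, 0 < eps -> exists delta, 0 < delta /\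
    forall y, vnorm (vsub y x) < delta -> vnorm (vsub (F y) (F x)) < eps.

Definition feasible n m (X : vec n -> Prop) (g : 'I_m -> vec n -> R)
  (x : vec n) : Prop := X x /\ forall i, g i x <= 0.

Definition solution_set n m (X : vec n -> Prop) (f : vec n -> R)
  (g : 'I_m -> vec n -> R) (x : vec n) : Prop :=
  feasible X g x /\ forall y, feasible X g y -> f x <= f y.

Definition active n m (g : 'I_m -> vec n -> R) (x : vec n) (i : 'I_m) : Prop :=
  g i x = 0.

Definition active_pos n m (g : 'I_m -> vec n -> R) (xbar : vec n)
  (lam : 'I_m -> R) (i : 'I_m) : Prop := g i xbar = 0 /\ 0 < lam i.

Definition X1 n m (X : vec n -> Prop) (g : 'I_m -> vec n -> R) (xbar : vec n)
  (lam : 'I_m -> R) (x : vec n) : Prop :=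
  X x /\ (forall i, active_pos g xbar lam i -> g i x = 0)
      /\ (forall i, ~ active_pos g xbar lam i -> g i x <= 0).

Definition same_direction n (u v : vec n) : Prop :=
  forall k, u k / vnorm u = v k / vnorm v.

Definition S1hat n m (X : vec n -> Prop) (g : 'I_m -> vec n -> R)
  (gradf : vec n -> vec n) (gradg : 'I_m -> vec n -> vec n)
  (xbar : vec n) (lam : 'I_m -> R) (x : vec n) : Prop :=
  X1 X g xbar lam x /\
  (forall i, active_pos g xbar lam i -> dot (gradg i xbar) (vsub x xbar) = 0) /\
  gradf x <> @vzero n /\ same_direction (gradf x) (gradf xbar).

Definition S2hat n m (X : vec n -> Prop) (g : 'I_m -> vec n -> R)
  (gradf : vec n -> vec n) (gradg : 'I_m -> vec n -> vec n)
  (xbar : vec n) (lam : 'I_m -> R) (x : vec n) : Prop :=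
  X1 X g xbar lam x /\
  (forall i, active_pos g xbar lam i -> 0 <= dot (gradg i xbar) (vsub x xbar)) /\
  gradf x <> @vzero n /\ same_direction (gradf x) (gradf xbar).

(* If x minimizes f on S then f x = f xbar, so quasiconvexity at xbar gives
   grad f(xbar).(x - xbar) <= 0 and grad g_i(xbar).(x - xbar) <= 0 for the active
   constraints; the KKT identity forces all these terms to vanish, and pseudoconvexity
   of quasiconvex functions at non-critical points turns the vanishing into g_i x = 0
   for i in tilde I and into f being constant on [xbar, x].  Every direction of
   strict descent at xbar is then a direction of non-ascent at x, so grad f x is a
   nonnegative multiple of grad f xbar, and continuity of grad f at xbar excludes the
   multiple 0.  Conversely, for x in S2'' the KKT identity gives
   grad f(x).(xbar - x) >= 0 with grad f x <> 0, hence f x <= f xbar by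
   pseudoconvexity. *)

From HB Require Import structures.
From mathcomp Require Import all_boot.
From Stdlib Require Import Reals Lra FunctionalExtensionality Classical.
Open Scope R_scope.
Set Implicit Arguments. Unset Strict Implicit.

HB.instance Definition _ := Monoid.isComLaw.Build R 0 Rplus
  (fun a b c => esym (Rplus_assoc a b c)) Rplus_comm Rplus_0_l.

Section RealSums.
Variable I : finType.
Implicit Types F G : I -> R.

Lemma sumR_scale a F :
  \big[Rplus/0]_(i : I) (a * F i) = a * \big[Rplus/0]_(i : I) F i.
Proof.
apply: (big_rec2 (fun y1 y2 => y1 = a * y2)); first by ring.
by move=> i y1 y2 _ ->; ring.
Qed.

Lemma sumR_le F G : (forall i, F i <= G i) ->
  \big[Rplus/0]_(i : I) F i <= \big[Rplus/0]_(i : I) G i.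
Proof.
move=> FG; apply: (big_ind2 (fun y1 y2 => y1 <= y2)) => [|? ? ? ? ? ?|i _];
  [exact: Rle_refl | lra | exact: FG].
Qed.

Lemma sumR_ge0 F : (forall i, 0 <= F i) -> 0 <= \big[Rplus/0]_(i : I) F i.
Proof.
move=> F0; apply: (big_ind (fun y => 0 <= y)) => [|? ? ? ?|i _] //; lra.
Qed.

Lemma sumR_abs F :
  Rabs (\big[Rplus/0]_(i : I) F i) <= \big[Rplus/0]_(i : I) Rabs (F i).
Proof.
apply: (big_ind2 (fun y1 y2 => Rabs y1 <= y2)) => [|x1 x2 y1 y2 H1 H2|i _].
- rewrite Rabs_R0; lra.
- have := Rabs_triang x1 y1; lra.
- exact: Rle_refl.
Qed.

Lemma sumR_term_le F j : (forall i, 0 <= F i) -> F j <= \big[Rplus/0]_(i : I) F i.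
Proof.
move=> F0; rewrite (bigD1 j) //=.
have : 0 <= \big[Rplus/0]_(i | i != j) F i.
  by apply: (big_ind (fun y => 0 <= y)) => [|? ? ? ?|i _] //; lra.
lra.
Qed.

Lemma sumR_nonpos_eq0 F : (forall i, F i <= 0) ->
  0 <= \big[Rplus/0]_(i : I) F i -> forall j, F j = 0.
Proof.
move=> F0 + j; rewrite (bigD1 j) //=.
have : \big[Rplus/0]_(i | i != j) F i <= 0.
  by apply: (big_ind (fun y => y <= 0)) => [|? ? ? ?|i _] //; lra.
have := F0 j; lra.
Qed.

End RealSums.

Section Vectors.
Variable n : nat.
Implicit Types u v w d e x y : vec n.

Lemma dot_comm u v : dot u v = dot v u.
Proof. by apply: eq_bigr => k _; rewrite Rmult_comm. Qed.

Lemma dot_addr d u v : dot d (vadd u v) = dot d u + dot d v.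
Proof. rewrite /dot -big_split; apply: eq_bigr => k _ /=; rewrite /vadd; ring. Qed.

Lemma dot_addl d u v : dot (vadd u v) d = dot u d + dot v d.
Proof. by rewrite dot_comm dot_addr !(dot_comm d). Qed.

Lemma dot_scaler d s u : dot d (vscale s u) = s * dot d u.
Proof. rewrite /dot -sumR_scale; apply: eq_bigr => k _; rewrite /vscale; ring. Qed.

Lemma dot_scalel d s u : dot (vscale s u) d = s * dot u d.
Proof. by rewrite dot_comm dot_scaler dot_comm. Qed.

Lemma dot_subr d u v : dot d (vsub u v) = dot d u - dot d v.
Proof.
have -> : vsub u v = vadd u (vscale (-1) v).
  by apply: functional_extensionality => k; rewrite /vsub /vadd /vscale; ring.
rewrite dot_addr dot_scaler; ring.
Qed.

Lemma dot_subl d u v : dot (vsub u v) d = dot u d - dot v d.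
Proof. by rewrite dot_comm dot_subr !(dot_comm d). Qed.

Lemma dot0l u : dot (@vzero n) u = 0.
Proof. by rewrite /dot big1 // => k _; rewrite /vzero Rmult_0_l. Qed.

Lemma dot_suml (J : finType) (F : J -> vec n) e :
  dot (fun k => \big[Rplus/0]_(j : J) F j k) e = \big[Rplus/0]_(j : J) dot (F j) e.
Proof.
rewrite /dot (eq_bigr (fun k => \big[Rplus/0]_(j : J) (F j k * e k))).
  by rewrite exchange_big.
by move=> k _; rewrite Rmult_comm -sumR_scale; apply: eq_bigr => j _; ring.
Qed.

Lemma dot_self_eq0 u : dot u u = 0 -> u = @vzero n.
Proof.
move=> uu0; apply: functional_extensionality => k.
have := sumR_term_le k (fun k => Rle_0_sqr (u k)).
rewrite /Rsqr -/(dot u u) uu0 => uk; rewrite /vzero; nra.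
Qed.

Lemma dot_self_pos u : u <> @vzero n -> 0 < dot u u.
Proof.
move=> u0; have : 0 <= dot u u by apply: sumR_ge0 => k; apply: Rle_0_sqr.
case/Rle_lt_or_eq_dec => // uu0; exfalso; exact/u0/dot_self_eq0.
Qed.

Lemma vnorm_ge0 u : 0 <= vnorm u.
Proof. exact: sqrt_pos. Qed.

Lemma vnorm_pos u : u <> @vzero n -> 0 < vnorm u.
Proof. by move=> u0; apply/sqrt_lt_R0/dot_self_pos. Qed.

Lemma vnorm_scale s u : vnorm (vscale s u) = Rabs s * vnorm u.
Proof.
rewrite /vnorm dot_scaler dot_scalel -Rmult_assoc -/(Rsqr s) sqrt_mult.
- by rewrite sqrt_Rsqr_abs.
- exact: Rle_0_sqr.
- by apply: sumR_ge0 => k; apply: Rle_0_sqr.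
Qed.

Lemma coord_le_vnorm u k : Rabs (u k) <= vnorm u.
Proof.
rewrite /vnorm -sqrt_Rsqr_abs; apply: sqrt_le_1_alt.
exact: (sumR_term_le k (fun k => Rle_0_sqr (u k))).
Qed.

Lemma dot_le_vnorm_sum w v :
  Rabs (dot w v) <= vnorm w * \big[Rplus/0]_(k < n) Rabs (v k).
Proof.
apply: Rle_trans (sumR_abs _) _; rewrite -sumR_scale; apply: sumR_le => k.
rewrite Rabs_mult; apply: Rmult_le_compat_r; [exact: Rabs_pos | exact: coord_le_vnorm].
Qed.

Lemma vsub_line y e s : vsub (vadd y (vscale s e)) y = vscale s e.
Proof. by apply: functional_extensionality => k; rewrite /vsub /vadd; ring. Qed.

Lemma same_direction_scale u v : u <> @vzero n -> v <> @vzero n ->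
  same_direction u v -> u = vscale (vnorm u / vnorm v) v.
Proof.
move=> /vnorm_pos u0 /vnorm_pos v0 uv; apply: functional_extensionality => k.
have -> : u k = u k / vnorm u * vnorm u by field; lra.
rewrite uv /vscale; field; lra.
Qed.

Lemma same_direction_scale_pos a v : 0 < a -> v <> @vzero n ->
  same_direction (vscale a v) v.
Proof.
move=> a0 /vnorm_pos v0 k; rewrite vnorm_scale Rabs_pos_eq; last lra.
rewrite /vscale; field; lra.
Qed.

End Vectors.

Lemma Rabs_le_inv a b : Rabs a <= b -> - b <= a <= b.
Proof.
by move=> ab; split; [have := Rle_abs (- a); rewrite Rabs_Ropp | have := Rle_abs a]; lra.
Qed.

Lemma le0_of_forall_pos_mul x c : (forall b, 0 < b -> x <= b * c) -> x <= 0.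
Proof.
move=> H; apply: Rnot_lt_le => x0.
have c0 := Rabs_pos c.
have := H (x / (2 * (Rabs c + 1))) ltac:(apply: Rdiv_lt_0_compat; lra).
have := Rle_abs c; have : x / (2 * (Rabs c + 1)) * (Rabs c + 1) = x / 2.
  by field; lra.
have : 0 < x / (2 * (Rabs c + 1)) by apply: Rdiv_lt_0_compat; lra.
nra.
Qed.

Definition near_0plus (P : R -> Prop) : Prop :=
  exists delta, 0 < delta /\ forall s, 0 < s < delta -> P s.

Lemma near_0plus_impl (P Q : R -> Prop) :
  (forall s, 0 < s -> P s -> Q s) -> near_0plus P -> near_0plus Q.
Proof. move=> PQ [d [d0 HP]]; exists d; split=> // s s0; apply: PQ; [lra | exact: HP]. Qed.

Lemma near_0plus_and (P Q : R -> Prop) :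
  near_0plus P -> near_0plus Q -> near_0plus (fun s => P s /\ Q s).
Proof.
move=> [d1 [d1_0 HP]] [d2 [d2_0 HQ]]; exists (Rmin d1 d2); split.
  exact: Rmin_pos.
move=> s s0; have := Rmin_l d1 d2; have := Rmin_r d1 d2.
by split; [apply: HP | apply: HQ]; lra.
Qed.

Lemma near_0plus_scale c (P : R -> Prop) :
  0 < c -> near_0plus P -> near_0plus (fun s => P (c * s)).
Proof.
move=> c0 [d [d0 HP]]; exists (d / c); split; first exact: Rdiv_lt_0_compat.
move=> s s0; apply: HP; split; first nra.
by apply: (Rmult_lt_reg_r (/ c)); [apply: Rinv_0_lt_compat | field_simplify; lra].
Qed.

Lemma near_0plus_lt c a : 0 < a -> near_0plus (fun s => c * s < a).
Proof.
move=> a0; exists (a / (Rabs c + 1)); split.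
  by apply: Rdiv_lt_0_compat; have := Rabs_pos c; lra.
move=> s [s0 sa]; have := Rabs_pos c; have := Rle_abs c => ? ?.
have : s * (Rabs c + 1) < a.
  by apply: (Rmult_lt_reg_r (/ (Rabs c + 1))); [apply: Rinv_0_lt_compat | field_simplify]; lra.
nra.
Qed.

Lemma near_0plus_lt1 : near_0plus (fun s => s < 1).
Proof. by exists 1; split=> [|s []]; lra. Qed.

Lemma near_0plus_witness (P : R -> Prop) : near_0plus P -> exists s, 0 < s /\ P s.
Proof. move=> [d [d0 HP]]; exists (d / 2); split; [lra | apply: HP; lra]. Qed.

Section FirstOrder.
Variable n : nat.
Implicit Types d e x y : vec n.

Lemma is_open_line (U : vec n -> Prop) y e : is_open U -> U y ->
  near_0plus (fun s => U (vadd y (vscale s e))).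
Proof.
move=> U_open Uy; have [d [d0 HU]] := U_open y Uy.
apply: near_0plus_impl (near_0plus_lt (vnorm e) d0) => s s0 es.
by apply: HU; rewrite vsub_line vnorm_scale Rabs_pos_eq; lra.
Qed.

Lemma has_gradient_line h y d e eps : has_gradient h y d -> 0 < eps ->
  near_0plus (fun s => Rabs (h (vadd y (vscale s e)) - h y - s * dot d e) <= eps * s).
Proof.
move=> hd eps0; have e0 := vnorm_ge0 e.
have [del [del0 Hdel]] := hd (eps / (vnorm e + 1)) ltac:(apply: Rdiv_lt_0_compat; lra).
apply: near_0plus_impl (near_0plus_lt (vnorm e) del0) => s s0 es.
have := Hdel (vscale s e); rewrite vnorm_scale dot_scaler Rabs_pos_eq; last lra.
move=> /(_ ltac:(lra)) /Rle_trans; apply.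
have : eps / (vnorm e + 1) * vnorm e <= eps.
  apply: (Rmult_le_reg_r (vnorm e + 1)); first lra.
  by field_simplify; nra.
nra.
Qed.

Lemma has_gradient_line_lt h y d e c : has_gradient h y d -> dot d e < c ->
  near_0plus (fun s => h (vadd y (vscale s e)) < h y + c * s).
Proof.
move=> hd dc; apply: near_0plus_impl (has_gradient_line e hd (eps := (c - dot d e) / 2) _);
  last lra.
move=> s s0 /Rabs_le_inv; nra.
Qed.

Lemma has_gradient_line_gt h y d e c : has_gradient h y d -> c < dot d e ->
  near_0plus (fun s => h y + c * s < h (vadd y (vscale s e))).
Proof.
move=> hd cd; apply: near_0plus_impl (has_gradient_line e hd (eps := (dot d e - c) / 2) _);
  last lra.
move=> s s0 /Rabs_le_inv; nra.
Qed.

Lemma has_gradient_flat h y d e : has_gradient h y d ->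
  near_0plus (fun s => h (vadd y (vscale s e)) = h y) -> dot d e = 0.
Proof.
move=> hd flat; case: (Rtotal_order (dot d e) 0) => [de|[//|de]].
- have [s [_ [Hs Hlt]]] := near_0plus_witness (near_0plus_and flat (has_gradient_line_lt hd de)).
  lra.
- have [s [_ [Hs Hgt]]] := near_0plus_witness (near_0plus_and flat (has_gradient_line_gt hd de)).
  lra.
Qed.

Variables (Gam : vec n -> Prop) (h : vec n -> R).
Hypothesis h_qc : quasiconvex_on Gam h.

Lemma quasiconvex_gradient_le0 x y d : Gam x -> Gam y -> has_gradient h x d ->
  h y <= h x -> dot d (vsub y x) <= 0.
Proof.
move=> Gx Gy hd hyx; apply: Rnot_lt_le => /(has_gradient_line_gt hd) up.
have [s [s0 [Hgt s1]]] := near_0plus_witness (near_0plus_and up near_0plus_lt1).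
have := h_qc Gx Gy (conj (Rlt_le _ _ s0) (Rlt_le _ _ s1)).
by rewrite Rmax_left //; lra.
Qed.

(* Away from critical points a quasiconvex function behaves pseudoconvexly. *)
Lemma quasiconvex_le_of_gradient_ge0 x y d d' : is_open Gam -> Gam x -> Gam y ->
  has_gradient h x d -> has_gradient h y d' -> d <> @vzero n ->
  0 <= dot d (vsub y x) -> h x <= h y.
Proof.
move=> Gam_open Gx Gy hd hd' d0 dyx; apply: Rnot_lt_le => hyx.
have gap : 0 < h x - h y by lra.
have near_y := near_0plus_and (is_open_line d Gam_open Gy)
  (near_0plus_and (has_gradient_line_lt hd' (Rlt_plus_1 (dot d' d)))
                  (near_0plus_lt (dot d' d + 1) gap)).
have [s [s0 [Gy' [hy' small]]]] := near_0plus_witness near_y.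
have := quasiconvex_gradient_le0 Gx Gy' hd ltac:(lra).
have -> : vsub (vadd y (vscale s d)) x = vadd (vsub y x) (vscale s d).
  by apply: functional_extensionality => k; rewrite /vsub /vadd /vscale; ring.
rewrite dot_addr dot_scaler; have := dot_self_pos d0; nra.
Qed.

End FirstOrder.

Lemma dot_nonpos_on_halfspace_ray n (u v : vec n) : u <> @vzero n ->
  (forall d, dot u d < 0 -> dot v d <= 0) -> exists a, 0 <= a /\ v = vscale a u.
Proof.
move=> /dot_self_pos uu0 Hv.
set a := dot v u / dot u u.
have vu0 : 0 <= dot v u.
  by have := Hv (vscale (-1) u); rewrite !dot_scaler; move=> /(_ ltac:(lra)); lra.
set w := vsub v (vscale a u).
have uw0 : dot u w = 0 by rewrite dot_subr dot_scaler (dot_comm u v) /a; field; lra.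
have vw_le0 sg : sg * sg = 1 -> sg * dot v w <= 0.
  move=> sg1; apply: (le0_of_forall_pos_mul (c := dot v u)) => b b0.
  have H := Hv (vsub (vscale sg w) (vscale b u)).
  rewrite (dot_subr u) (dot_subr v) !dot_scaler uw0 in H.
  have : 0 < b * dot u u by nra.
  by move=> ?; have := H ltac:(lra); lra.
have vw0 : dot v w = 0.
  by have := vw_le0 1 ltac:(ring); have := vw_le0 (-1) ltac:(ring); lra.
exists a; split; first by apply: Rmult_le_pos => //; apply/Rlt_le/Rinv_0_lt_compat.
have /dot_self_eq0 w0 : dot w w = 0.
  by rewrite {1}/w dot_subl dot_scalel vw0 uw0; ring.
apply: functional_extensionality => k.
by have := f_equal (fun z => z k) w0; rewrite /w /vsub /vzero /vscale; lra.
Qed.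

Lemma vcontinuous_at_dot_pos n (F : vec n -> vec n) x e w : vcontinuous_at F x ->
  0 < dot (F x) w -> near_0plus (fun t => 0 < dot (F (vadd x (vscale t e))) w).
Proof.
move=> Fcont Fxw.
set S := \big[Rplus/0]_(k < n) Rabs (w k).
have S0 : 0 <= S by apply: sumR_ge0 => k; apply: Rabs_pos.
have [del [del0 Hdel]] := Fcont (dot (F x) w / (S + 1))
  ltac:(apply: Rdiv_lt_0_compat; lra).
apply: near_0plus_impl (near_0plus_lt (vnorm e) del0) => t t0 et.
have Fy := Hdel (vadd x (vscale t e)) ltac:(rewrite vsub_line vnorm_scale Rabs_pos_eq; lra).
have := dot_le_vnorm_sum (vsub (F (vadd x (vscale t e))) (F x)) w.
rewrite dot_subl -/S => /Rabs_le_inv.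
have : vnorm (vsub (F (vadd x (vscale t e))) (F x)) * S <= dot (F x) w / (S + 1) * S.
  by apply: Rmult_le_compat_r; lra.
have : dot (F x) w / (S + 1) * S < dot (F x) w.
  by apply: (Rmult_lt_reg_r (S + 1)); [lra | field_simplify; lra].
lra.
Qed.

(* If [grad f x = 0], quasiconvexity applied to [P = xbar - k s grad f xbar] and
   [Q = x + s grad f xbar] fails at the point of [[P, Q]] lying just above
   [mm = xbar + t (x - xbar)]: there [f] grows at first order (continuity of the
   gradient at [xbar]), while at [P] it decreases and at [Q] it is stationary. *)
Lemma quasiconvex_flat_segment_gradient_neq0 n (Gam : vec n -> Prop) f gradf xbar x :
  is_open Gam -> is_convex Gam -> quasiconvex_on Gam f ->
  (forall y, Gam y -> has_gradient f y (gradf y)) -> vcontinuous_at gradf xbar ->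
  gradf xbar <> @vzero n -> Gam xbar -> Gam x ->
  (forall t, 0 <= t <= 1 -> f (vadd xbar (vscale t (vsub x xbar))) = f xbar) ->
  gradf x <> @vzero n.
Proof.
move=> Gam_open Gam_conv f_qc f_diff f_cont gb0 Gxbar Gx flat gx0.
set e := vsub x xbar in flat; set gb := gradf xbar in gb0.
have fx : f x = f xbar.
  rewrite -(flat 1); last lra.
  by congr f; apply: functional_extensionality => k; rewrite /vadd /vscale /e /vsub; ring.
have [t [t0 [B0 t_lt1]]] := near_0plus_witness (near_0plus_and
  (vcontinuous_at_dot_pos e f_cont (dot_self_pos gb0)) near_0plus_lt1).
set mm := vadd xbar (vscale t e) in B0; set B := dot (gradf mm) gb in B0.
have Gmm : Gam mm by apply: Gam_conv => //; lra.
set k := t / (2 * (1 - t)).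
have k0 : 0 < k by apply: Rdiv_lt_0_compat; lra.
have dirP : dot gb (vscale (-1) gb) < 0.
  by rewrite dot_scaler; have := dot_self_pos gb0; lra.
have dirQ : dot (gradf x) gb < t * B / 4 by rewrite gx0 dot0l; nra.
have dirZ : B / 2 < dot (gradf mm) gb by rewrite -/B; lra.
have nearP := near_0plus_scale k0 (near_0plus_and
  (is_open_line (vscale (-1) gb) Gam_open Gxbar) (has_gradient_line_lt (f_diff _ Gxbar) dirP)).
have nearQ := near_0plus_and (is_open_line gb Gam_open Gx)
  (has_gradient_line_lt (f_diff _ Gx) dirQ).
have nearZ := near_0plus_scale (c := t / 2) ltac:(lra)
  (has_gradient_line_gt (f_diff _ Gmm) dirZ).
have [s [s0 [[GP fP] [[GQ fQ] fZ]]]] :=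
  near_0plus_witness (near_0plus_and nearP (near_0plus_and nearQ nearZ)).
have := f_qc _ _ t GP GQ (conj (Rlt_le _ _ t0) (Rlt_le _ _ t_lt1)).
have -> : vadd (vadd xbar (vscale (k * s) (vscale (-1) gb)))
    (vscale t (vsub (vadd x (vscale s gb)) (vadd xbar (vscale (k * s) (vscale (-1) gb))))) =
    vadd mm (vscale (t / 2 * s) gb).
  apply: functional_extensionality => i.
  rewrite /mm /e /k /vadd /vscale /vsub; field; lra.
rewrite (flat t) in fZ; last lra.
have : Rmax (f (vadd xbar (vscale (k * s) (vscale (-1) gb)))) (f (vadd x (vscale s gb)))
    < f xbar + t * B / 4 * s.
  have : 0 < t * B / 4 * s by apply: Rmult_lt_0_compat; nra.
  by move=> ?; apply: Rmax_lub_lt; lra.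
lra.
Qed.

Lemma X1_feasible n m (X : vec n -> Prop) (g : 'I_m -> vec n -> R) xbar lam x :
  X1 X g xbar lam x -> feasible X g x.
Proof.
move=> [Xx [Hpos Hother]]; split=> // i.
by case: (classic (active_pos g xbar lam i)) => [/Hpos ->|/Hother //]; apply: Rle_refl.
Qed.

Section Problem.
Variables (n m : nat) (Gam X : vec n -> Prop) (f : vec n -> R) (g : 'I_m -> vec n -> R).
Variables (gradf : vec n -> vec n) (gradg : 'I_m -> vec n -> vec n).
Variables (xbar : vec n) (lam : 'I_m -> R).
Hypotheses (HGopen : is_open Gam) (HGconv : is_convex Gam).
Hypothesis HXsub : forall x, X x -> Gam x.
Hypothesis Hxbar : solution_set X f g xbar.
Hypothesis Hfdiff : forall x, Gam x -> has_gradient f x (gradf x).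
Hypothesis Hfcont : forall x, Gam x -> vcontinuous_at gradf x.
Hypothesis Hfqc : quasiconvex_on Gam f.
Hypothesis Hgdiff : forall i, active g xbar i ->
  forall x, Gam x -> has_gradient (g i) x (gradg i x).
Hypothesis Hgqc : forall i, active g xbar i -> quasiconvex_on Gam (g i).
Hypothesis Hgradf0 : gradf xbar <> @vzero n.
Hypothesis HMFCQ : exists y : vec n, forall i, active g xbar i -> dot (gradg i xbar) y < 0.
Hypothesis Hlam_nonneg : forall i, 0 <= lam i.
Hypothesis HKKT : forall k : 'I_n, gradf xbar k + \big[Rplus/0]_(i < m)
  (if Req_EM_T (g i xbar) 0 then lam i * gradg i xbar k else 0) = 0.

Let Gxbar : Gam xbar := HXsub (proj1 (proj1 Hxbar)).

Lemma kkt_dot e : dot (gradf xbar) e + \big[Rplus/0]_(i < m)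
  (if Req_EM_T (g i xbar) 0 then lam i * dot (gradg i xbar) e else 0) = 0.
Proof.
have KKT0 : vadd (gradf xbar) (fun k => \big[Rplus/0]_(i < m)
    (if Req_EM_T (g i xbar) 0 then lam i * gradg i xbar k else 0)) = @vzero n.
  exact: functional_extensionality HKKT.
apply: (eq_trans _ (dot0l e)); rewrite -KKT0 dot_addl dot_suml.
congr (_ + _); apply: eq_bigr => i _.
by case: Req_EM_T => ? /=; symmetry; [exact: dot_scalel | exact: dot0l].
Qed.

Lemma S2hat_solution x : S2hat X g gradf gradg xbar lam x -> solution_set X f g x.
Proof.
move=> [x_X1 [dir_ge0 [gx0 same_dir]]]; have feas := X1_feasible x_X1.
have Gx := HXsub (proj1 feas).
split=> // y Hy; apply: Rle_trans (proj2 Hxbar y Hy).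
have gb_dir : dot (gradf xbar) (vsub x xbar) <= 0.
  have := kkt_dot (vsub x xbar).
  suff : 0 <= \big[Rplus/0]_(i < m) (if Req_EM_T (g i xbar) 0
    then lam i * dot (gradg i xbar) (vsub x xbar) else 0) by lra.
  apply: sumR_ge0 => i; case: Req_EM_T => [gi0|?] /=; last exact: Rle_refl.
  case: (Rle_lt_or_eq_dec _ _ (Hlam_nonneg i)) => [lam0|<-]; last lra.
  by apply: Rmult_le_pos; [lra | apply: dir_ge0].
apply: (quasiconvex_le_of_gradient_ge0 Hfqc HGopen Gx Gxbar (Hfdiff Gx) (Hfdiff Gxbar) gx0).
rewrite (same_direction_scale gx0 Hgradf0 same_dir) dot_scalel !dot_subr.
rewrite dot_subr in gb_dir.
have := vnorm_pos gx0; have := vnorm_pos Hgradf0 => ? ?.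
apply: Rmult_le_pos; last lra.
by apply: Rmult_le_pos; [lra | apply/Rlt_le/Rinv_0_lt_compat].
Qed.

Section Solution.
Variable x : vec n.
Hypothesis Hx : solution_set X f g x.

Let Gx : Gam x := HXsub (proj1 (proj1 Hx)).

Let fx : f x = f xbar :=
  Rle_antisym _ _ (proj2 Hx _ (proj1 Hxbar)) (proj2 Hxbar _ (proj1 Hx)).

Lemma solution_gradient_orth :
  dot (gradf xbar) (vsub x xbar) = 0 /\
  forall i, active_pos g xbar lam i -> dot (gradg i xbar) (vsub x xbar) = 0.
Proof.
have gb_le0 : dot (gradf xbar) (vsub x xbar) <= 0.
  by apply: (quasiconvex_gradient_le0 Hfqc Gxbar Gx (Hfdiff Gxbar)); rewrite fx; apply: Rle_refl.
have term_le0 i : (if Req_EM_T (g i xbar) 0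
    then lam i * dot (gradg i xbar) (vsub x xbar) else 0) <= 0.
  case: Req_EM_T => [gi0|?] /=; last exact: Rle_refl.
  have := quasiconvex_gradient_le0 (Hgqc gi0) Gxbar Gx (Hgdiff gi0 Gxbar)
    ltac:(rewrite gi0; exact: (proj2 (proj1 Hx) i)).
  by have := Hlam_nonneg i; nra.
have kkt := kkt_dot (vsub x xbar).
have sum_ge0 : 0 <= \big[Rplus/0]_(i < m) (if Req_EM_T (g i xbar) 0
    then lam i * dot (gradg i xbar) (vsub x xbar) else 0) by lra.
have terms0 := sumR_nonpos_eq0 term_le0 sum_ge0.
split.
  rewrite big1 in kkt; first by rewrite Rplus_0_r in kkt.
  by move=> i _; exact: terms0.
move=> i [gi0 lam0]; move: (terms0 i); case: Req_EM_T => [_|//] /=.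
by case/Rmult_integral => //; lra.
Qed.

Lemma solution_active_pos_eq0 i : active_pos g xbar lam i -> g i x = 0.
Proof.
move=> ipos; have [gi0 _] := ipos.
apply: Rle_antisym; first exact: (proj2 (proj1 Hx) i).
rewrite -{1}gi0; apply: (quasiconvex_le_of_gradient_ge0 (Hgqc gi0) HGopen Gxbar Gx
  (Hgdiff gi0 Gxbar) (Hgdiff gi0 Gx)).
  have [y Hy] := HMFCQ; move=> grad0; have := Hy i gi0; rewrite grad0 dot0l; lra.
by rewrite (proj2 solution_gradient_orth i ipos); apply: Rle_refl.
Qed.

Lemma solution_segment t : 0 <= t <= 1 -> f (vadd xbar (vscale t (vsub x xbar))) = f xbar.
Proof.
move=> t01; have Gz := HGconv Gxbar Gx t01.
apply: Rle_antisym.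
  by have := Hfqc Gxbar Gx t01; rewrite -fx Rmax_right //; rewrite fx; apply: Rle_refl.
apply: (quasiconvex_le_of_gradient_ge0 Hfqc HGopen Gxbar Gz (Hfdiff Gxbar) (Hfdiff Gz) Hgradf0).
by rewrite vsub_line dot_scaler (proj1 solution_gradient_orth) Rmult_0_r; apply: Rle_refl.
Qed.

Lemma solution_gradient_colinear : exists a, 0 < a /\ gradf x = vscale a (gradf xbar).
Proof.
have gx0 : gradf x <> @vzero n.
  exact: (quasiconvex_flat_segment_gradient_neq0 HGopen HGconv Hfqc Hfdiff
    (Hfcont Gxbar) Hgradf0 Gxbar Gx solution_segment).
have orth : dot (gradf x) (vscale (-1) (vsub x xbar)) = 0.
  apply: (has_gradient_flat (Hfdiff Gx)).
  apply: near_0plus_impl near_0plus_lt1 => s s0 s1.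
  rewrite fx -(solution_segment (t := 1 - s)); last lra.
  by congr f; apply: functional_extensionality => k; rewrite /vadd /vscale /vsub; ring.
have [a [a0 gx]] : exists a, 0 <= a /\ gradf x = vscale a (gradf xbar).
  apply: dot_nonpos_on_halfspace_ray Hgradf0 _ => d descent.
  have [s [s0 [Gw fw]]] := near_0plus_witness (near_0plus_and (is_open_line d HGopen Gxbar)
    (has_gradient_line_lt (c := 0) (Hfdiff Gxbar) descent)).
  have := quasiconvex_gradient_le0 Hfqc Gx Gw (Hfdiff Gx) ltac:(lra).
  have -> : vsub (vadd xbar (vscale s d)) x = vadd (vscale s d) (vscale (-1) (vsub x xbar)).
    by apply: functional_extensionality => k; rewrite /vadd /vscale /vsub; ring.
  by rewrite dot_addr orth dot_scaler; nra.
exists a; split=> //; case: (Rle_lt_or_eq_dec _ _ a0) => // a_eq0; exfalso; apply: gx0.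
by rewrite gx -a_eq0; apply: functional_extensionality => k; rewrite /vscale Rmult_0_l.
Qed.

Lemma solution_S1hat : S1hat X g gradf gradg xbar lam x.
Proof.
have [[Xx gx_le0] _] := Hx; have [a [a0 gx]] := solution_gradient_colinear.
split; first by split=> //; split=> [i /solution_active_pos_eq0 | i _] //; exact: gx_le0.
split; first exact: (proj2 solution_gradient_orth).
rewrite gx; split; last exact: same_direction_scale_pos.
move=> gx0; apply: Hgradf0; apply: functional_extensionality => k.
have := f_equal (fun v => v k) gx0; rewrite /vscale /vzero => ?; nra.
Qed.

End Solution.

End Problem.

Unset Implicit Arguments.

Theorem theorem6 (n m : nat) (Gam X : vec n -> Prop)
  (f : vec n -> R) (g : 'I_m -> vec n -> R)
  (gradf : vec n -> vec n) (gradg : 'I_m -> vec n -> vec n)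
  (xbar : vec n) (lam : 'I_m -> R)
  (HGopen : is_open Gam) (HGconv : is_convex Gam)
  (HXopen : is_open X) (HXconv : is_convex X)
  (HXsub : forall x, X x -> Gam x)
  (Hxbar : solution_set X f g xbar)
  (Hfdiff : forall x, Gam x -> has_gradient f x (gradf x))
  (Hfcont : forall x, Gam x -> vcontinuous_at gradf x)
  (Hfqc : quasiconvex_on Gam f)
  (Hgdiff : forall i, active g xbar i ->
     forall x, Gam x -> has_gradient (g i) x (gradg i x))
  (Hgqc : forall i, active g xbar i -> quasiconvex_on Gam (g i))
  (Hgcont : forall i, ~ active g xbar i -> continuous_at_v (g i) xbar)
  (Hgradf0 : gradf xbar <> @vzero n)
  (HMFCQ : exists y : vec n, forall i, active g xbar i ->
     dot (gradg i xbar) y < 0)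
  (Hlam_nonneg : forall i, 0 <= lam i)
  (Hlam_compl : forall i, lam i * g i xbar = 0)
  (HKKT : forall k : 'I_n,
     gradf xbar k
     + \big[Rplus/0]_(i < m)
         (if Req_EM_T (g i xbar) 0 then lam i * gradg i xbar k else 0) = 0) :
  forall x : vec n,
    (solution_set X f g x <-> S1hat X g gradf gradg xbar lam x) /\
    (S1hat X g gradf gradg xbar lam x <-> S2hat X g gradf gradg xbar lam x).
Proof.
move=> x.
have S1_S2 : S1hat X g gradf gradg xbar lam x -> S2hat X g gradf gradg xbar lam x.
  by case=> x_X1 [orth nondeg]; split=> //; split=> // i /orth ->; apply: Rle_refl.
have S2_sol : S2hat X g gradf gradg xbar lam x -> solution_set X f g x.
  exact: (S2hat_solution HGopen HXsub Hxbar Hfdiff Hfqc Hgradf0 Hlam_nonneg HKKT).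
have sol_S1 : solution_set X f g x -> S1hat X g gradf gradg xbar lam x.
  exact: (solution_S1hat HGopen HGconv HXsub Hxbar Hfdiff Hfcont Hfqc Hgdiff Hgqc
    Hgradf0 HMFCQ Hlam_nonneg HKKT).
tauto.
Qed.
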